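(* The following sequence is exact: $$0\rightarrow H_1(S, \mathbb R)\xrightarrow{f_3} \mathcal K_\tau \xrightarrow{f_2} \widetilde{\mathcal T}_\lambda \xrightarrow{f_1} \mathbb R \rightarrow 0.$$
   Context: Let $S$ be an oriented surface of genus $g$ with $p\geq 1$ punctures and $m=2g-2+p>0$. Let $\tau$ be a decorated ideal triangulation of $S$: an ideal triangulation whose ideal triangles are numbered $\tau_1,\dots,\tau_{2m}$, each with a marked corner. The three sides of each $\tau_\mu$ are numbered $0,1,2$ in counterclockwise order, the $0$-side being opposite the marked corner. Let $\lambda$ be the underlying ideal triangulation (forget the marks), with edges $\lambda_1,\dots,\lambda_{3m}$ and dual edges $\lambda_1^*,\dots,\lambda_{3m}^*$ in the dual graph (whose vertices $\tau_\mu^*$ correspond to the triangles). $\mathcal K_\tau=\mathbb R^{4m}=\{(\ln y_1,\ln z_1,\dots,\ln y_{2m},\ln z_{2m})\}$ is the space of Kashaev coordinates. To such a vector assign to the sides of $\tau_\mu$ the numbers $\ln h_\mu^0=\ln y_\mu-\ln z_\mu$, $\ln h_\mu^1=\ln z_\mu$, $\ln h_\mu^2=-\ln y_\mu$; this identifies $\mathcal K_\tau$ with the subspace of $\mathbb R^{6m}=\{(\dots,\ln h_\mu^0,\ln h_\mu^1,\ln h_\mu^2,\dots)\}$ defined by $\ln h_\mu^0+\ln h_\mu^1+\ln h_\mu^2=0$ for every $\mu$. $\widetilde{\mathcal T}_\lambda=\mathbb R^{3m}=\{(\ln x_1,\dots,\ln x_{3m})\}$ is the enhanced Teichmüller space parametrized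 by shear coordinates, $\ln x_i$ being the shear coordinate at edge $\lambda_i$. The maps are: $f_1(\ln x_1,\dots,\ln x_{3m})=\sum_{i=1}^{3m}\ln x_i$; $f_2$ is the linear map given by $\ln x_i=\ln h_\mu^s+\ln h_\nu^t$ whenever $\lambda_i$ bounds the $s$-side of $\tau_\mu$ and the $t$-side of $\tau_\nu$ ($\mu$ may equal $\nu$); $f_3$ sends a homology class represented by $\sum_{i=1}^{3m}c_i\lambda_i^*$ (oriented dual edges) to the vector obtained by setting $\ln h_\mu^s=-c_i$ and $\ln h_\nu^t=c_i$ whenever $\lambda_i^*$ is oriented from the $s$-side of $\tau_\mu$ to the $t$-side of $\tau_\nu$ (this vector lies in $\mathcal K_\tau$ because the chain is a cycle). *)

From HB Require Import structures.
From mathcomp Require Import all_boot all_order all_algebra.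
From mathcomp Require Import reals.
Set Implicit Arguments. Unset Strict Implicit. Unset Printing Implicit Defensive.
Import Order.TTheory GRing.Theory Num.Theory.
Local Open Scope ring_scope.

(* Combinatorial model of a decorated ideal triangulation tau with 2m
   triangles tau_mu (mu : 'I_(2 * m)) and 3m edges lambda_i (i : 'I_(3 * m)).
   A side is a pair (mu, s): the s-side of tau_mu, s in {0,1,2} numbered
   counterclockwise with the 0-side opposite the marked corner.
   The gluing is given by [ep : dedge m -> side m]: the oriented dual edge
   lambda_i^* goes from the side [ep (i,false)] to the side [ep (i,true)];
   these are the two sides bounding lambda_i.  [ep] must be a bijection
   (every side is glued to exactly one other side), and the dual graph must
   be connected (S is connected). *)

Definition side (m : nat) := ('I_(2 * m) * 'I_3)%type.
Definition dedge (m : nat) := ('I_(3 * m) * bool)%type.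

Definition dual_adj (m : nat) (ep : dedge m -> side m) : rel 'I_(2 * m) :=
  fun mu nu => [exists i : 'I_(3 * m),
     (((ep (i, false)).1 == mu) && ((ep (i, true)).1 == nu))
  || (((ep (i, false)).1 == nu) && ((ep (i, true)).1 == mu))].

Definition decorated_triangulation (m : nat) (ep : dedge m -> side m) : Prop :=
  bijective ep /\ (forall mu nu : 'I_(2 * m), connect (dual_adj ep) mu nu).

(* H_1(S,R) is realised as the cycle space of the dual graph (a deformation
   retract of S): real chains sum_i c_i lambda_i^* with zero boundary. *)
Definition is_cycle (R : realType) (m : nat) (ep : dedge m -> side m)
  (c : 'I_(3 * m) -> R) : Prop :=
  forall mu : 'I_(2 * m),
    \sum_(i < 3 * m | (ep (i, true)).1 == mu) c i
    - \sum_(i < 3 * m | (ep (i, false)).1 == mu) c i = 0.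

(* Kashaev coordinates: mu |-> (ln y_mu, ln z_mu) *)
Definition kash (R : realType) (m : nat) := 'I_(2 * m) -> (R * R)%type.

(* the associated numbers ln h_mu^s on the sides *)
Definition h_of (R : realType) (m : nat) (k : kash R m) (sd : side m) : R :=
  let: (mu, s) := sd in
  if val s == 0%N then (k mu).1 - (k mu).2
  else if val s == 1%N then (k mu).2
  else - (k mu).1.

Definition f1 (R : realType) (m : nat) (x : 'I_(3 * m) -> R) : R :=
  \sum_(i < 3 * m) x i.

Definition f2 (R : realType) (m : nat) (ep : dedge m -> side m)
  (k : kash R m) : 'I_(3 * m) -> R :=
  fun i => h_of k (ep (i, false)) + h_of k (ep (i, true)).

(* f_3 on chains: the vector in R^{6m}: ln h = -c_i at the start side of
   lambda_i^*, +c_i at its end side (unique by bijectivity of ep) ... *)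
Definition f3_h (R : realType) (m : nat) (ep : dedge m -> side m)
  (c : 'I_(3 * m) -> R) (sd : side m) : R :=
  \sum_(d : dedge m | ep d == sd) (if d.2 then c d.1 else - c d.1).

Definition f3 (R : realType) (m : nat) (ep : dedge m -> side m)
  (c : 'I_(3 * m) -> R) : kash R m :=
  fun mu => (- f3_h ep c (mu, inord 2), f3_h ep c (mu, inord 1)).

(* The map f_2 sums the two side values glued along each edge, so it kills
   exactly the side functions that are odd under the gluing, i.e. those of the
   form d |-> ±c_i on the two ends of the dual edge d = lambda_i^*.  Such a
   side function comes from Kashaev coordinates iff it sums to zero on each
   triangle, i.e. iff c has zero boundary: this gives exactness in the middle
   of the sequence, and injectivity of f_3 since the side values of f_3 c are
   ±c.  For exactness at the Teichmueller space one starts from the side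
   function putting x_i on the end side of lambda_i^*; its triangle sums add
   up to f_1 x = 0, so by connectivity of the dual graph they are the
   boundary of a chain, and correcting by that chain makes it balanced. *)
From HB Require Import structures.
From mathcomp Require Import all_boot all_order all_algebra.
From mathcomp Require Import reals.
From mathcomp Require Import lra.
From Stdlib Require Import FunctionalExtensionality.
Set Implicit Arguments. Unset Strict Implicit. Unset Printing Implicit Defensive.
Import GRing.Theory Num.Theory.
Local Open Scope ring_scope.

Lemma sum_delta (R : nmodType) (I : finType) (P : pred I) (i : I) (t : R) :
  \sum_(j | P j) (if j == i then t else 0) = if P i then t else 0.
Proof.
rewrite big_mkcond /= (bigD1 i) //= eqxx big1 ?addr0 // => j /negbTE ->.
by case: (P j).
Qed.

Lemma sum_ord3 (R : nmodType) (F : 'I_3 -> R) :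
  \sum_(s < 3) F s = F (inord 0) + F (inord 1) + F (inord 2).
Proof.
rewrite !big_ord_recr big_ord0 /= add0r.
by congr (F _ + F _ + F _); apply/val_inj; rewrite /= inordK.
Qed.

Lemma ord3P (s : 'I_3) : [\/ s = inord 0, s = inord 1 | s = inord 2].
Proof.
case: s => [[|[|[|n]]] Hs]; [constructor 1|constructor 2|constructor 3|by []];
  by apply/val_inj; rewrite /= inordK.
Qed.

Section Triangulation.
Variables (R : realType) (m : nat).

Definition balanced (h : side m -> R) : Prop :=
  forall mu, \sum_(s < 3) h (mu, s) = 0.

(* Inverse of [h_of] on balanced side functions; [f3] is [kash_of (f3_h ep)]. *)
Definition kash_of (h : side m -> R) : kash R m :=
  fun mu => (- h (mu, inord 2), h (mu, inord 1)).

Lemma h_of0 (k : kash R m) mu : h_of k (mu, inord 0) = (k mu).1 - (k mu).2.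
Proof. by rewrite /h_of /= inordK. Qed.

Lemma h_of1 (k : kash R m) mu : h_of k (mu, inord 1) = (k mu).2.
Proof. by rewrite /h_of /= inordK. Qed.

Lemma h_of2 (k : kash R m) mu : h_of k (mu, inord 2) = - (k mu).1.
Proof. by rewrite /h_of /= inordK. Qed.

Lemma h_of_balanced (k : kash R m) : balanced (h_of k).
Proof. by move=> mu; rewrite sum_ord3 h_of0 h_of1 h_of2; lra. Qed.

Lemma h_of_kash_of (h : side m -> R) : balanced h -> h_of (kash_of h) =1 h.
Proof.
move=> hbal [mu s]; have := hbal mu; rewrite sum_ord3 => hmu.
case: (ord3P s) => ->; rewrite ?h_of0 ?h_of1 ?h_of2 /= ?opprK //; lra.
Qed.

Lemma kash_of_h_of (k : kash R m) : kash_of (h_of k) = k.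
Proof.
apply: functional_extensionality => mu.
by rewrite /kash_of h_of2 h_of1 opprK; case: (k mu).
Qed.

Variable ep : dedge m -> side m.

Lemma f2_kash_of (h : side m -> R) i : balanced h ->
  f2 ep (kash_of h) i = h (ep (i, false)) + h (ep (i, true)).
Proof. by move=> hbal; rewrite /f2 !h_of_kash_of. Qed.

Definition boundary (c : 'I_(3 * m) -> R) (mu : 'I_(2 * m)) : R :=
  \sum_(i < 3 * m | (ep (i, true)).1 == mu) c i
  - \sum_(i < 3 * m | (ep (i, false)).1 == mu) c i.

Lemma boundaryD (c1 c2 : 'I_(3 * m) -> R) mu :
  boundary (fun i => c1 i + c2 i) mu = boundary c1 mu + boundary c2 mu.
Proof. rewrite /boundary !big_split /=; lra. Qed.

Lemma boundaryZ (a : R) (c : 'I_(3 * m) -> R) mu :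
  boundary (fun i => a * c i) mu = a * boundary c mu.
Proof. by rewrite /boundary mulrBr !mulr_sumr. Qed.

Lemma boundary0 mu : boundary (fun _ => 0) mu = 0.
Proof. by rewrite /boundary !big1 ?subr0. Qed.

Lemma boundary_delta (i : 'I_(3 * m)) (t : R) mu :
  boundary (fun j => if j == i then t else 0) mu =
  ((ep (i, true)).1 == mu)%:R * t - ((ep (i, false)).1 == mu)%:R * t.
Proof.
rewrite /boundary !sum_delta.
by case: (_ == mu); case: (_ == mu); rewrite ?mul1r ?mul0r.
Qed.

Lemma boundary_path a p : path (dual_adj ep) a p ->
  exists c, forall mu, boundary c mu = (mu == last a p)%:R - (mu == a)%:R.
Proof.
elim: p a => [|b p IHp] a /=.
  by move=> _; exists (fun _ => 0) => mu; rewrite boundary0 subrr.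
case/andP=> /existsP [i adj_i] /IHp [c bc].
have [e be] : exists e, forall mu,
    boundary e mu = (mu == b)%:R - (mu == a)%:R.
  case/orP: adj_i => /andP [/eqP ea /eqP eb].
    exists (fun j => if j == i then 1 else 0) => mu.
    by rewrite boundary_delta ea eb !mulr1 ![_ == mu]eq_sym.
  exists (fun j => if j == i then -1 else 0) => mu.
  rewrite boundary_delta ea eb ![_ == mu]eq_sym; lra.
by exists (fun j => c j + e j) => mu; rewrite boundaryD bc be; lra.
Qed.

Lemma boundary_onto (v : 'I_(2 * m) -> R) :
  (forall mu nu, connect (dual_adj ep) mu nu) -> \sum_mu v mu = 0 ->
  exists c, forall mu, boundary c mu = v mu.
Proof.
move=> conn v0.
case: (pickP (fun _ : 'I_(2 * m) => true)) => [root _|empty]; last first.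
  by exists (fun _ => 0) => mu; have := empty mu.
have chains (s : seq 'I_(2 * m)) : exists c, forall nu,
    boundary c nu = \sum_(mu <- s) v mu * ((nu == mu)%:R - (nu == root)%:R).
  elim: s => [|mu s [c bc]].
    by exists (fun _ => 0) => nu; rewrite boundary0 big_nil.
  have /connectP [p pth mu_last] := conn root mu.
  have [e be] := boundary_path pth.
  exists (fun j => v mu * e j + c j) => nu.
  by rewrite boundaryD boundaryZ be bc big_cons -mu_last.
have [c bc] := chains (index_enum _); exists c => nu.
rewrite bc (eq_bigr (fun mu => v mu * (nu == mu)%:R - v mu * (nu == root)%:R));
  last by move=> *; rewrite mulrBr.
rewrite sumrB -mulr_suml v0 mul0r subr0.
rewrite (bigD1 nu) //= eqxx mulr1 big1 ?addr0 // => mu /negbTE.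
by rewrite eq_sym => ->; rewrite mulr0.
Qed.

Definition signed_chain (c : 'I_(3 * m) -> R) (d : dedge m) : R :=
  if d.2 then c d.1 else - c d.1.

Lemma sum_dedge (G : dedge m -> R) :
  \sum_d G d = \sum_(i < 3 * m) (G (i, false) + G (i, true)).
Proof.
transitivity (\sum_(i < 3 * m) \sum_(b : bool) G (i, b)).
  by rewrite pair_bigA; apply: eq_bigr => -[].
by apply: eq_bigr => i _; rewrite big_bool addrC.
Qed.

Lemma sum_dedge_at (G : dedge m -> R) mu :
  \sum_(d | (ep d).1 == mu) G d =
  \sum_(i < 3 * m | (ep (i, true)).1 == mu) G (i, true)
  + \sum_(i < 3 * m | (ep (i, false)).1 == mu) G (i, false).
Proof. by rewrite big_mkcond sum_dedge big_split addrC -!big_mkcond. Qed.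

Lemma boundaryE (c : 'I_(3 * m) -> R) mu :
  boundary c mu = \sum_(d | (ep d).1 == mu) signed_chain c d.
Proof. by rewrite sum_dedge_at /signed_chain /= sumrN. Qed.

Variable g : side m -> dedge m.
Hypotheses (epK : cancel ep g) (gK : cancel g ep).

Lemma sum_triangle_sides (F : side m -> R) mu :
  \sum_(s < 3) F (mu, s) = \sum_(d | (ep d).1 == mu) F (ep d).
Proof.
rewrite -(reindex ep (P := fun sd : side m => sd.1 == mu) (F := F));
  last by apply: onW_bij; exists g.
rewrite -(big_pred1_eq (@GRing.add R) mu (fun nu => \sum_(s < 3) F (nu, s))).
rewrite pair_big.
by apply: eq_big => [[nu s]|[nu s]] //=; rewrite andbT.
Qed.

Lemma sum_sides (F : side m -> R) :
  \sum_(d : dedge m) F (ep d) = \sum_mu \sum_(s < 3) F (mu, s).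
Proof.
rewrite -(reindex ep (P := xpredT) (F := F)); last by apply: onW_bij; exists g.
by rewrite pair_bigA; apply: eq_bigr => -[].
Qed.

Lemma f3_hE (c : 'I_(3 * m) -> R) d : f3_h ep c (ep d) = signed_chain c d.
Proof.
rewrite /f3_h (big_pred1 d) // => d' /=.
by apply/eqP/eqP => [/(can_inj epK)|->].
Qed.

Lemma sum_f3_h (c : 'I_(3 * m) -> R) mu :
  \sum_(s < 3) f3_h ep c (mu, s) = boundary c mu.
Proof.
by rewrite sum_triangle_sides boundaryE; apply: eq_bigr => d _; rewrite f3_hE.
Qed.

Lemma cycle_balanced (c : 'I_(3 * m) -> R) :
  is_cycle ep c <-> balanced (f3_h ep c).
Proof.
split=> cc mu; first by rewrite sum_f3_h; exact: cc.
by rewrite -[LHS]/(boundary c mu) -sum_f3_h.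
Qed.

Lemma f3_inj_cycle (c : 'I_(3 * m) -> R) :
  is_cycle ep c -> f3 ep c = (fun _ => (0, 0)) -> c = (fun _ => 0).
Proof.
move=> /cycle_balanced cbal f3c0; apply: functional_extensionality => i.
change (signed_chain c (i, true) = 0).
rewrite -f3_hE -(h_of_kash_of cbal (ep (i, true))).
have -> : kash_of (f3_h ep c) = fun _ => (0, 0) by exact: f3c0.
case: (ep (i, true)) => mu s /=.
by case: ifP => _; [|case: ifP => _]; rewrite /= ?subrr ?oppr0.
Qed.

Lemma f2_f3_cycle (c : 'I_(3 * m) -> R) :
  is_cycle ep c -> f2 ep (f3 ep c) = (fun _ => 0).
Proof.
move=> /cycle_balanced cbal; apply: functional_extensionality => i.
by rewrite f2_kash_of // !f3_hE /signed_chain addNr.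
Qed.

(* In ker f_2 the values of h_of k on the end sides of the dual edges form a
   chain whose signed values recover h_of k on every side. *)
Lemma ker_f2_cycle (k : kash R m) :
  f2 ep k = (fun _ => 0) -> exists2 c, is_cycle ep c & f3 ep c = k.
Proof.
move=> f2k0; pose c i := h_of k (ep (i, true)).
have f3c : f3_h ep c =1 h_of k.
  move=> sd; rewrite -(gK sd) f3_hE /signed_chain /c.
  case: (g sd) => i [] //=.
  by have := congr1 (@^~ i) f2k0; rewrite /f2 /=; lra.
exists c.
  apply/cycle_balanced => mu; under eq_bigr do rewrite f3c.
  exact: h_of_balanced.
change (kash_of (f3_h ep c) = k).
by rewrite -[RHS]kash_of_h_of (functional_extensionality _ _ f3c).
Qed.

Lemma f1_f2 (k : kash R m) : f1 (f2 ep k) = 0.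
Proof.
rewrite /f1 /f2 -(sum_dedge (fun d => h_of k (ep d))) sum_sides.
by rewrite big1 // => mu _; exact: h_of_balanced.
Qed.

Lemma ker_f1_im_f2 (x : 'I_(3 * m) -> R) :
  (forall mu nu, connect (dual_adj ep) mu nu) -> f1 x = 0 ->
  exists k, f2 ep k = x.
Proof.
move=> conn x0.
pose v mu := \sum_(i < 3 * m | (ep (i, true)).1 == mu) x i.
have sum_v : \sum_mu v mu = f1 x.
  by rewrite /f1 (partition_big (fun i => (ep (i, true)).1) xpredT).
have [c bc] : exists c, forall mu, boundary c mu = - v mu.
  apply: (@boundary_onto (fun mu => - v mu) conn).
  by rewrite sumrN sum_v x0 oppr0.
pose h (d : dedge m) := (if d.2 then x d.1 else 0) + signed_chain c d.
have h_bal : balanced (h \o g).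
  move=> mu; rewrite sum_triangle_sides.
  under eq_bigr do rewrite /= epK.
  rewrite big_split /= -boundaryE bc sum_dedge_at /=.
  by rewrite big1_eq addr0 subrr.
exists (kash_of (h \o g)); apply: functional_extensionality => i.
by rewrite f2_kash_of //= !epK /h /signed_chain /=; lra.
Qed.

End Triangulation.

Theorem theorem4p1 (R : realType) (m : nat) (ep : dedge m -> side m) :
  (0 < m)%N -> decorated_triangulation ep ->
  [/\ (forall c : 'I_(3 * m) -> R, is_cycle ep c ->
         f3 ep c = (fun _ => (0, 0)) -> c = (fun _ => 0)),
      (forall k : kash R m,
         f2 ep k = (fun _ => 0) <-> exists2 c, is_cycle ep c & f3 ep c = k),
      (forall x : 'I_(3 * m) -> R, f1 x = 0 <-> exists k : kash R m, f2 ep k = x)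
    & (forall r : R, exists x : 'I_(3 * m) -> R, f1 x = r)].
Proof.
move=> m_gt0 [[g epK gK] conn]; split.
- exact: (f3_inj_cycle (R := R) epK gK).
- move=> k; split; first exact: (ker_f2_cycle (R := R) epK gK).
  by case=> c cc <-; exact: (f2_f3_cycle (R := R) epK gK cc).
- move=> x; split; first exact: (ker_f1_im_f2 (R := R) epK gK conn).
  by case=> k <-; exact: (f1_f2 (R := R) epK gK k).
- move=> r; have i0 : 'I_(3 * m) by exists 0%N; rewrite muln_gt0.
  by exists (fun j => if j == i0 then r else 0); exact: sum_delta xpredT i0 r.
Qed.
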